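(* Let $G$ and $H$ be connected graphs without isolated vertices such that $\gamma_t(H)=2$ and $\gamma_t(G)=\gamma_t(G\Box H)$. Let $V(H)=\{h_1,\ldots,h_n\}$ and let $D$ be a minimum total dominating set of $G\Box H$. Define $D'=\{(g,h)\in D : \text{there exists } h'\in V(H),\ h'\neq h,\ (g,h')\in D\}$, $D''=D\setminus D'$, and $D''_i=\{(g,h)\in D'': h=h_i\}$ for $i\in\{1,\ldots,n\}$. Let $p_G:V(G\Box H)\to V(G)$, $p_G(g,h)=g$, and set $S=p_G(D)$, $S'=p_G(D')$, $S''=p_G(D'')$, $S''_i=p_G(D''_i)$, $P=N_G(S)\setminus S$, $P'=N_G(S')\setminus S'$, $P''=N_G(S'')\setminus S''$. Then: (A) $S\cup P=V(G)$. (B) $\gamma_t(G)=2|S'|+|S''|$. (C) $S'$ is an independent set and no two vertices of $S'$ have a common neighbor in $G$. (D) There are no edges of $G$ between $S'$ and $S''$. (E) There exists a nonnegative integer $k$ such that $G[S'']$ is isomorphic to $kK_2$. (E') If $T'$ is a minimum-size set of vertices of $G$ that totally dominates $S'$ (i.e. $S'\subseteq N_G(T')$), then $T'\subseteq P'$, $|T'|=|S'|$, and $X=S'\cup T'\cup S''$ is a minimum total dominating set of $G$; moreover, for every $g\in S''$, the set $\mathit{pn}_G(g,X)$ is a subset of $S''$ of size $1$. (F) For every $i\in\{1,\ldots,n\}$ there exists a nonnegative integer $k$ such that $G[S''_i]$ is isomorphic to $kK_2$. (G) For every $i\in\{1,\ldots,n\}$, $S''_i$ totally dominates $P''\cup S''_i$,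 i.e. $P''\cup S''_i\subseteq N_G(S''_i)$. (H) For every $i\in\{1,\ldots,n\}$, no two distinct vertices of $S''_i$ have a common neighbor in $G$. (I) No vertex of $S'$ has a common neighbor in $G$ with a vertex of $S''$. (J) The sets $S'$, $S''$, $P'$, $P''$ are pairwise disjoint. (K) $\gamma_t(G[S'\cup P'])=2\gamma(G[S'\cup P'])=2|S'|$. (L) $\gamma_t(G[S''\cup P''])=|S''|$. (M) If $H$ is not isomorphic to $K_2$, then $S'=\emptyset$.
   Context: All graphs are finite, simple and undirected. $N_G(v)$ is the (open) neighborhood of $v$ and $N_G(X)=\bigcup_{v\in X}N_G(v)$. A set $X\subseteq V(G)$ totally dominates $Y\subseteq V(G)$ if $Y\subseteq N_G(X)$; a total dominating set of a graph $G$ without isolated vertices is a set $S$ with $N_G(S)=V(G)$, and the total domination number $\gamma_t(G)$ is the minimum size of such a set. $\gamma(G)$ is the domination number. $G[X]$ is the subgraph induced by $X$. $kK_2$ is the disjoint union of $k$ copies of $K_2$. The Cartesian product $G\Box H$ has vertex set $V(G)\times V(H)$, with $(u_1,v_1)\sim(u_2,v_2)$ iff either $u_1=u_2$ and $v_1v_2\in E(H)$, or $v_1=v_2$ and $u_1u_2\in E(G)$. For $X\subseteq V(G)$ and $u\in X$, $\mathit{pn}_G(u,X)=\{w\in V(G): N_G(w)\cap X=\{u\}\}$ (the $X$-private neighbors of $u$). *)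

From mathcomp Require Import all_boot.
Set Implicit Arguments. Unset Strict Implicit. Unset Printing Implicit Defensive.

Section Graphs.
Variable T : finType.
Implicit Types (e : rel T) (X Y D : {set T}).

Definition simple_graph e := symmetric e /\ irreflexive e.
Definition connected e := forall x y : T, connect e x y.
Definition no_isolated e := forall x : T, exists y, e x y.

Definition Nb e (v : T) : {set T} := [set w | e v w].
Definition NS e X : {set T} := \bigcup_(v in X) Nb e v.

Definition tdominates e X Y := Y \subset NS e X.
Definition is_tds e D := NS e D == [set: T].
(* total domination number (minimum over total dominating sets; the default
   #|T| is irrelevant for graphs without isolated vertices) *)
Definition gamma_t e : nat := \big[minn/#|T|]_(D : {set T} | is_tds e D) #|D|.
Definition is_min_tds e D := is_tds e D && (#|D| == gamma_t e).

Definition is_ds e D := D :|: NS e D == [set: T].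
Definition gamma e : nat := \big[minn/#|T|]_(D : {set T} | is_ds e D) #|D|.

Definition pn e (u : T) X : {set T} := [set w | Nb e w :&: X == [set u]].

Definition induced e X : rel {x : T | x \in X} := fun x y => e (val x) (val y).
End Graphs.
Arguments induced {T} e X _ _.

Definition cartesian (TG TH : finType) (eG : rel TG) (eH : rel TH) : rel (TG * TH) :=
  fun p q => ((p.1 == q.1) && eH p.2 q.2) || ((p.2 == q.2) && eG p.1 q.1).

(* k K_2 : vertices (i, b), i < k, b : bool; edges (i,b)~(i,~~b) *)
Definition kK2 (k : nat) : rel ('I_k * bool) :=
  fun p q => (p.1 == q.1) && (p.2 != q.2).

Definition isomorphic (T1 T2 : finType) (e1 : rel T1) (e2 : rel T2) :=
  exists f : T1 -> T2, bijective f /\ forall x y, e1 x y = e2 (f x) (f y).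
Arguments kK2 : clear implicits.
Arguments cartesian {TG TH} eG eH _ _.

From mathcomp Require Import all_boot zify.
Set Implicit Arguments. Unset Strict Implicit. Unset Printing Implicit Defensive.

(* Every vertex of S' carries at least two vertices of D and every vertex of S''
   exactly one, so |D| >= 2|S'| + |S''|.  Conversely, if T has at most |S'|
   vertices and totally dominates S', then X = S' ∪ T ∪ S'' totally dominates G:
   a vertex outside S is dominated within every layer G × {h}, and a vertex of
   S'' within its own layer.  Since |D| = γ_t(G) <= |X|, all these inequalities
   are equalities.  Every item follows by choosing T suitably, or by modifying X,
   so that a total dominating set of G with fewer than |D| vertices would arise;
   in particular each vertex of S'' has exactly one neighbour in S'', lying in
   the same layer, which yields the perfect matchings of (E) and (F). *)


Lemma disjointP (T : finType) (A B : {set T}) :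
  reflect (forall x, x \in A -> x \in B -> False) [disjoint A & B].
Proof.
rewrite disjoints_subset; apply: (iffP subsetP) => [AB x xA xB|AB x xA].
  by move: (AB x xA); rewrite inE xB.
by rewrite inE; apply/negP; exact: AB.
Qed.

Section TotalDomination.
Variables (T : finType) (e : rel T).
Implicit Types (X Y A B : {set T}).

Lemma NSP X w : reflect (exists2 v, v \in X & e v w) (w \in NS e X).
Proof.
apply: (iffP bigcupP) => [[v vX]|[v vX ev]]; last by exists v; rewrite // inE.
by rewrite inE => ev; exists v.
Qed.

Lemma NSU X Y : NS e (X :|: Y) = NS e X :|: NS e Y.
Proof. exact: bigcup_setU. Qed.

Lemma is_tdsP X : reflect (forall w, exists2 v, v \in X & e v w) (is_tds e X).
Proof.
apply: (iffP eqP) => [NX w|NX]; first by apply/NSP; rewrite NX inE.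
by apply/setP => w; rewrite inE; apply/NSP.
Qed.

Lemma tds_setU X Y A B :
  A \subset NS e X -> B \subset NS e Y -> A :|: B = setT -> is_tds e (X :|: Y).
Proof.
move=> domA domB cover; rewrite /is_tds NSU eqEsubset subsetT -cover /=.
exact: setUSS.
Qed.

Lemma bigmin_card_le (P : pred {set T}) Y : P Y ->
  \big[minn/#|T|]_(D : {set T} | P D) #|D| <= #|Y|.
Proof.
move=> PY; have : Y \in index_enum {set T} by rewrite mem_index_enum.
elim: (index_enum _) => [//|D s IHs]; rewrite big_cons inE.
case/orP => [/eqP <-|Ys]; first by rewrite PY geq_minl.
by case: ifP => _; rewrite ?geq_min IHs ?orbT.
Qed.

Lemma bigmin_card_ge (P : pred {set T}) m : (exists Y, P Y) ->
  (forall Y, P Y -> m <= #|Y|) -> m <= \big[minn/#|T|]_(D : {set T} | P D) #|D|.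
Proof.
move=> [Y0 PY0] hm; apply: (big_ind (fun x => m <= x)) => //.
- exact: leq_trans (hm _ PY0) (max_card _).
- by move=> x y hx hy; rewrite leq_min hx.
Qed.

Lemma gamma_t_le Y : is_tds e Y -> gamma_t e <= #|Y|.
Proof. exact: bigmin_card_le. Qed.

Lemma gamma_t_ge m : (exists Y, is_tds e Y) ->
  (forall Y, is_tds e Y -> m <= #|Y|) -> m <= gamma_t e.
Proof. exact: bigmin_card_ge. Qed.

Lemma gamma_le Y : is_ds e Y -> gamma e <= #|Y|.
Proof. exact: bigmin_card_le. Qed.

Lemma gamma_ge m : (exists Y, is_ds e Y) ->
  (forall Y, is_ds e Y -> m <= #|Y|) -> m <= gamma e.
Proof. exact: bigmin_card_ge. Qed.

Lemma gamma_t_le_card : gamma_t e <= #|T|.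
Proof.
apply: (big_ind (fun x => x <= #|T|)) => // [x y hx _|Y _]; last exact: max_card.
by rewrite geq_min hx.
Qed.

Lemma pnP u X w :
  reflect [/\ u \in X, e w u & forall v, v \in X -> e w v -> v = u] (w \in pn e u X).
Proof.
rewrite inE; apply: (iffP eqP) => [NwX|[uX ewu uniq]].
  have : u \in Nb e w :&: X by rewrite NwX inE.
  rewrite !inE => /andP [ewu uX]; split => // v vX ewv.
  by apply/set1P; rewrite -NwX !inE ewv.
by apply/setP => v; rewrite !inE; apply/andP/eqP => [[ewv vX]|->] //; exact: uniq.
Qed.

Hypothesis e_sym : symmetric e.

Lemma min_tds_pn X u : is_tds e X -> #|X| <= gamma_t e -> u \in X ->
  exists w, w \in pn e u X.
Proof.
move=> /is_tdsP tX minX uX.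
case: (pickP (fun w => w \in pn e u X)) => [w|no_pn]; first by exists w.
exfalso; suff /gamma_t_le : is_tds e (X :\ u).
  by move: minX; rewrite (cardsD1 u X) uX; lia.
apply/is_tdsP => w; have [v vX evw] := tX w.
case: (eqVneq v u) => [->|nvu] in evw *; last by exists v; rewrite // !inE nvu.
case: (pickP (fun v => (v \in X) && (v != u) && e v w)).
  by move=> v' /andP [/andP [v'X nv'u] ev'w]; exists v'; rewrite // !inE nv'u.
move=> only_u; suff : w \in pn e u X by rewrite no_pn.
apply/pnP; split; rewrite 1?e_sym // => v' v'X ewv'.
apply/eqP; apply: contraFT (only_u v') => nv'u.
by rewrite v'X nv'u e_sym.
Qed.

End TotalDomination.

Section InducedDomination.
Variables (T : finType) (e : rel T) (U : {set T}).
Local Notation sT := {x : T | x \in U}.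
Implicit Types (Y : {set T}) (Z : {set sT}).

Definition lift_in Y : {set sT} := [set x : sT | val x \in Y].

Lemma lift_inK Y : Y \subset U -> val @: lift_in Y = Y.
Proof.
move=> sYU; apply/setP => w; apply/imsetP/idP => [[x]|wY]; first by rewrite inE => xY ->.
by exists (exist _ w (subsetP sYU w wY)); rewrite ?inE.
Qed.

Lemma val_imset_sub Z : val @: Z \subset U.
Proof. by apply/subsetP => w /imsetP [x _ ->]; exact: valP. Qed.

Lemma lift_in_eqT Y : (lift_in Y == setT) = (U \subset Y).
Proof.
apply/eqP/subsetP => [lYT w wU|sUY]; last by apply/setP => x; rewrite !inE sUY ?(valP x).
by have := in_setT (exist _ w wU : sT); rewrite -lYT inE.
Qed.

Lemma NS_induced Z : NS (induced e U) Z = lift_in (NS e (val @: Z)).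
Proof.
apply/setP => x; rewrite /lift_in inE.
apply/NSP/NSP => [[z zZ ezx]|[_ /imsetP [z zZ ->] ezx]]; last by exists z.
by exists (val z) => //; exact: imset_f.
Qed.

Lemma is_tds_induced Z : is_tds (induced e U) Z = (U \subset NS e (val @: Z)).
Proof. by rewrite /is_tds NS_induced lift_in_eqT. Qed.

Lemma is_ds_induced Z :
  is_ds (induced e U) Z = (U \subset (val @: Z) :|: NS e (val @: Z)).
Proof.
rewrite /is_ds NS_induced -lift_in_eqT; congr (_ == _).
by apply/setP => x; rewrite !inE (mem_imset _ _ val_inj).
Qed.

Lemma gamma_t_induced m :
    (exists2 Y : {set T}, Y \subset U /\ U \subset NS e Y & #|Y| <= m) ->
    (forall Y, Y \subset U -> U \subset NS e Y -> m <= #|Y|) ->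
  gamma_t (induced e U) = m.
Proof.
move=> [Y [sYU domY] leYm] minm; have tdsY : is_tds (induced e U) (lift_in Y).
  by rewrite is_tds_induced lift_inK.
apply/eqP; rewrite eqn_leq (leq_trans (gamma_t_le tdsY)) /=; last first.
  by rewrite -(card_imset _ val_inj) lift_inK.
apply: gamma_t_ge => [|Z]; first by exists (lift_in Y).
by rewrite is_tds_induced -(card_imset _ val_inj); apply: minm; exact: val_imset_sub.
Qed.

Lemma gamma_induced m :
    (exists2 Y : {set T}, Y \subset U /\ U \subset Y :|: NS e Y & #|Y| <= m) ->
    (forall Y, Y \subset U -> U \subset Y :|: NS e Y -> m <= #|Y|) ->
  gamma (induced e U) = m.
Proof.
move=> [Y [sYU domY] leYm] minm; have dsY : is_ds (induced e U) (lift_in Y).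
  by rewrite is_ds_induced lift_inK.
apply/eqP; rewrite eqn_leq (leq_trans (gamma_le dsY)) /=; last first.
  by rewrite -(card_imset _ val_inj) lift_inK.
apply: gamma_ge => [|Z]; first by exists (lift_in Y).
by rewrite is_ds_induced -(card_imset _ val_inj); apply: minm; exact: val_imset_sub.
Qed.

End InducedDomination.

Section InducedMatching.
Variables (T : finType) (e : rel T) (U : {set T}).
Hypotheses (e_sym : symmetric e) (e_irr : irreflexive e).
Hypothesis one_nb : {in U, forall w, #|Nb e w :&: U| = 1}.

Definition mate w := odflt w [pick v in Nb e w :&: U].

Lemma mate_nbs w : w \in U -> Nb e w :&: U = [set mate w].
Proof.
move=> wU; have /eqP/cards1P [v NwU] := one_nb wU.
by rewrite /mate; case: pickP => [u|/(_ v)]; rewrite NwU inE ?eqxx // => /eqP ->.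
Qed.

Lemma mate_in : {in U, forall w, mate w \in U}.
Proof. by move=> w wU; have /setIP [] : mate w \in Nb e w :&: U by rewrite mate_nbs ?set11. Qed.

Lemma edge_mate : {in U &, forall w v, e w v = (v == mate w)}.
Proof.
move=> w v wU vU; apply/idP/eqP => [ewv|->]; first by apply/set1P; rewrite -mate_nbs // !inE ewv.
by have := set11 (mate w); rewrite -mate_nbs // !inE => /andP [].
Qed.

Lemma mateK : {in U, involutive mate}.
Proof.
move=> w wU; have mwU := mate_in wU.
by apply/esym/eqP; rewrite -edge_mate // e_sym edge_mate.
Qed.

Lemma mate_neq w : w \in U -> mate w != w.
Proof. by move=> wU; rewrite eq_sym -edge_mate ?e_irr. Qed.

(* An edge {w, mate w} of the matching is represented by its endpoint of smaller
   enum_rank; a vertex is coded by the index of its edge among these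
   representatives, together with the flag "is not the representative". *)
Definition pair_rep w := if enum_rank w < enum_rank (mate w) then w else mate w.
Definition pair_reps := [set w in U | enum_rank w < enum_rank (mate w)].

Lemma pair_rep_in w : w \in U -> pair_rep w \in pair_reps.
Proof.
move=> wU; rewrite /pair_rep inE; case: ltnP => [-> | ]; first by rewrite wU.
rewrite mate_in // mateK // ltn_neqAle => ->; rewrite andbT.
by apply: contra (mate_neq wU) => /eqP/ord_inj/enum_rank_inj ->.
Qed.

Lemma pair_repK r : r \in pair_reps -> pair_rep r = r /\ pair_rep (mate r) = r.
Proof.
case/setIdP => rU lt_r; rewrite /pair_rep lt_r mateK //.
by split=> //; case: ltnP => //; lia.
Qed.

Local Notation k := #|pair_reps|.
Local Notation sT := {x : T | x \in U}.

Definition kK2_vertex (p : 'I_k * bool) : T :=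
  if p.2 then mate (enum_val p.1) else enum_val p.1.

Lemma kK2_vertex_in p : kK2_vertex p \in U.
Proof.
have /setIdP [rU _] := enum_valP p.1.
by rewrite /kK2_vertex; case: p.2; rewrite ?mate_in.
Qed.

Lemma pair_rep_kK2_vertex p : pair_rep (kK2_vertex p) = enum_val p.1.
Proof. by have [? ?] := pair_repK (enum_valP p.1); rewrite /kK2_vertex; case: p.2. Qed.

Definition to_kK2 (x : sT) : 'I_k * bool :=
  (enum_rank_in (pair_rep_in (valP x)) (pair_rep (val x)), val x != pair_rep (val x)).

Definition of_kK2 (p : 'I_k * bool) : sT := exist _ (kK2_vertex p) (kK2_vertex_in p).

Lemma to_kK2K : cancel to_kK2 of_kK2.
Proof.
move=> [w wU]; apply: val_inj; rewrite /= /kK2_vertex /= enum_rankK_in ?pair_rep_in //.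
by rewrite /pair_rep; case: ltnP; rewrite /= ?eqxx // eq_sym mate_neq ?mateK.
Qed.

Lemma of_kK2K : cancel of_kK2 to_kK2.
Proof.
move=> [i b]; have /setIdP [rU _] := enum_valP i.
congr (_, _); last by rewrite /= pair_rep_kK2_vertex /kK2_vertex; case: b; rewrite ?eqxx ?mate_neq.
apply: enum_val_inj; rewrite enum_rankK_in ?pair_rep_in ?kK2_vertex_in //.
exact: pair_rep_kK2_vertex.
Qed.

Lemma edge_kK2_vertex p q : e (kK2_vertex p) (kK2_vertex q) = kK2 k p q.
Proof.
have mate_vertex (r : 'I_k * bool) : mate (kK2_vertex r) = kK2_vertex (r.1, ~~ r.2).
  have /setIdP [rU _] := enum_valP r.1.
  by rewrite /kK2_vertex; case: r.2; rewrite ?mateK.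
have vertex_inj : injective kK2_vertex.
  by move=> r r' eq_rr'; rewrite -[r]of_kK2K -[r']of_kK2K; congr to_kK2; exact: val_inj.
rewrite edge_mate ?kK2_vertex_in // mate_vertex (inj_eq vertex_inj).
by case: p q => [i b] [j c]; rewrite /kK2 /= xpair_eqE eq_sym; case: b c => [] [].
Qed.

Lemma induced_kK2 : exists k, isomorphic (induced e U) (kK2 k).
Proof.
exists k, to_kK2; split; first by exists of_kK2; [exact: to_kK2K | exact: of_kK2K].
by move=> x y; rewrite -edge_kK2_vertex /induced -{1}(to_kK2K x) -{1}(to_kK2K y).
Qed.

End InducedMatching.

Lemma isomorphic_K2 (T : finType) (e : rel T) (a b : T) :
  simple_graph e -> e a b -> #|T| <= 2 -> isomorphic e (kK2 1).
Proof.
move=> [e_sym e_irr] eab le2.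
have nab : a != b by apply: contraTneq eab => ->; rewrite e_irr.
have ab x : (x == a) || (x == b).
  apply: contraT; rewrite negb_or => /andP [nxa nxb]; move: (max_card (x |: [set a; b])).
  by rewrite cardsU1 cards2 !inE negb_or nxa nxb nab => /leq_trans/(_ le2).
exists (fun x => (ord0, x == a)); split.
  exists (fun p : 'I_1 * bool => if p.2 then a else b) => [x|[i c]] /=.
    by case: (eqVneq x a) => [->|nxa] //; move: (ab x); rewrite (negbTE nxa) => /eqP.
  by rewrite (ord1 i); case: c; rewrite /= ?eqxx // eq_sym (negbTE nab).
move=> x y; rewrite /kK2 /=.
have nba : (b == a) = false by rewrite eq_sym (negbTE nab).
by case/orP: (ab x) => /eqP ->; case/orP: (ab y) => /eqP ->;
  rewrite ?eqxx ?nba ?e_irr // e_sym.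
Qed.

Section Proposition3.
Variables (VG VH : finType) (eG : rel VG) (eH : rel VH).
Hypotheses (sG : simple_graph eG) (sH : simple_graph eH).
Hypotheses (iG : no_isolated eG) (iH : no_isolated eH).
Variable h0 : VH.
Variable D : {set VG * VH}.
Hypothesis D_tds : is_tds (cartesian eG eH) D.
Hypothesis card_D : #|D| = gamma_t eG.

Definition D' := [set p in D | [exists h' : VH, (h' != p.2) && ((p.1, h') \in D)]].
Definition D'' := D :\: D'.
Definition D''_ := fun h : VH => [set p in D'' | p.2 == h].
Definition S := [set p.1 | p in D].
Definition S' := [set p.1 | p in D'].
Definition S'' := [set p.1 | p in D''].
Definition S''_ := fun h : VH => [set p.1 | p in D''_ h].
Definition P := NS eG S :\: S.
Definition P' := NS eG S' :\: S'.
Definition P'' := NS eG S'' :\: S''.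

Lemma eG_sym : symmetric eG. Proof. exact: sG.1. Qed.
Lemma eG_irr : irreflexive eG. Proof. exact: sG.2. Qed.

Lemma other_vertex (h : VH) : exists h', h' != h.
Proof. by have [h' ehh'] := iH h; exists h'; apply: contraTneq ehh' => ->; rewrite sH.2. Qed.

Lemma SP g : reflect (exists h, (g, h) \in D) (g \in S).
Proof.
by apply: (iffP imsetP) => [[[a h] gh ->]|[h gh]]; [exists h | exists (g, h)].
Qed.

Lemma S'P g :
  reflect (exists h1 h2, [/\ h1 != h2, (g, h1) \in D & (g, h2) \in D]) (g \in S').
Proof.
apply: (iffP imsetP) => [[[a h]]|[h1 [h2 [nh g1 g2]]]].
  by case/setIdP => /= ahD /existsP [h' /andP [nh' ah'D]] ->; exists h, h'; rewrite eq_sym.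
by exists (g, h1); rewrite // inE g1; apply/existsP; exists h2; rewrite eq_sym nh.
Qed.

Lemma S''P g :
  reflect (exists h, (g, h) \in D /\ forall h', (g, h') \in D -> h' = h) (g \in S'').
Proof.
apply: (iffP imsetP) => [[[a h]]|[h [gh uniq]]].
  case/setDP => ahD ahD' -> /=; exists h; split=> // h' ah'D.
  case: (eqVneq h' h) => // nh; case/negP: ahD'.
  by rewrite inE ahD; apply/existsP; exists h'; rewrite nh.
exists (g, h); rewrite // !inE gh andbT negb_exists; apply/forallP => h'.
by apply/nandP; case: (eqVneq h' h) => [->|nh]; [left | right; apply: contra nh => /uniq ->].
Qed.

Lemma S''_layer_uniq g h1 h2 : g \in S'' -> (g, h1) \in D -> (g, h2) \in D -> h1 = h2.
Proof. by case/S''P => h [_ uniq] /uniq -> /uniq ->. Qed.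

Lemma D'_sub : D' \subset D.
Proof. by apply/subsetP => p /setIdP []. Qed.

Lemma S_split : S = S' :|: S''.
Proof. by rewrite /S -{1}(setID D D') (setIidPr D'_sub) imsetU. Qed.

Lemma disjoint_S'S'' : [disjoint S' & S''].
Proof.
apply/disjointP => g /S'P [h1 [h2 [nh g1 g2]]] gS''.
by rewrite (S''_layer_uniq gS'' g1 g2) eqxx in nh.
Qed.

Lemma in_D' g h h' : h' != h -> (g, h) \in D -> (g, h') \in D -> (g, h) \in D'.
Proof. by move=> nh gh gh'; rewrite inE gh; apply/existsP; exists h'; rewrite nh. Qed.

Lemma D''_S'' p : p \in D'' -> p.1 \in S''.
Proof. exact: imset_f. Qed.

Lemma S''_D'' g h : g \in S'' -> (g, h) \in D -> (g, h) \in D''.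
Proof.
move=> gS gh; apply/setDP; split=> //; apply/negP => /setIdP [_ /existsP [h' /andP [nh gh']]].
by rewrite (S''_layer_uniq gS gh' gh) eqxx in nh.
Qed.

Lemma mem_S''_ h g : (g \in S''_ h) = (g \in S'') && ((g, h) \in D).
Proof.
apply/imsetP/andP => [[[a b]]|[gS gh]].
  by case/setIdP => abD'' /eqP /= <- ->; split; [exact: (D''_S'' abD'') | case/setDP: abD''].
by exists (g, h); rewrite // inE eqxx andbT S''_D''.
Qed.

Lemma card_D'' : #|D''| = #|S''|.
Proof.
rewrite card_in_imset // => [[a b] [a' b']] abD'' /setDP [abD' _] /= eaa'.
have /setDP [abD _] := abD''.
subst a'; have aS := D''_S'' abD''.
by rewrite (S''_layer_uniq aS abD abD').
Qed.

Definition column s := [set p in D' | p.1 == s].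

Lemma card_D' : #|D'| = \sum_(s in S') #|column s|.
Proof.
rewrite -sum1_card (partition_big fst (mem S')) => [|p pD]; last exact: imset_f.
by apply: eq_bigr => s _; rewrite -sum1_card; apply: eq_bigl => p; rewrite /column inE.
Qed.

Lemma column_ge2 s : s \in S' -> 2 <= #|column s|.
Proof.
case/S'P => h1 [h2 [nh s1 s2]].
have <- : #|[set (s, h1); (s, h2)]| = 2 by rewrite cards2 xpair_eqE eqxx nh.
apply: subset_leq_card; apply/subsetP => p /set2P [] ->; rewrite inE eqxx andbT.
  by rewrite (in_D' _ s1 s2) // eq_sym.
exact: in_D' nh s2 s1.
Qed.

Lemma card_D_split : #|D| = #|D'| + #|S''|.
Proof. by rewrite -card_D'' -(cardsID D' D) (setIidPr D'_sub). Qed.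

Lemma card_D_ge : 2 * #|S'| + #|S''| <= #|D|.
Proof.
rewrite card_D_split leq_add2r card_D' mulnC -sum_nat_const.
by apply: leq_sum => s; exact: column_ge2.
Qed.

Lemma layer_dominated g h :
  (forall h', eH h' h -> (g, h') \notin D) -> exists2 g', (g', h) \in D & eG g' g.
Proof.
move=> no_nb; have /is_tdsP/(_ (g, h)) [[a b] abD] := D_tds.
case/orP => /andP [/eqP /= eab eb]; last by exists a; rewrite // -eab.
by move: abD; rewrite eab (negbTE (no_nb b eb)).
Qed.

Lemma notS_dominated g h : g \notin S -> exists2 g', (g', h) \in D & eG g' g.
Proof.
move=> gS; apply: layer_dominated => h' _; apply: contra gS => gh'.
by apply/SP; exists h'.
Qed.

Lemma S''_dominated g h : g \in S'' -> (g, h) \in D -> exists2 g', (g', h) \in D & eG g' g.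
Proof.
move=> gS gh; apply: layer_dominated => h' ehh'; apply/negP => /S''_layer_uniq /(_ gh).
by move=> /(_ gS) eh'h; rewrite eh'h sH.2 in ehh'.
Qed.

Lemma near_S g : g \in S \/ exists2 s, s \in S & eG s g.
Proof.
case: (boolP (g \in S)) => gS; [by left | right].
by have [s sh0 esg] := notS_dominated h0 gS; exists s => //; apply/SP; exists h0.
Qed.

Definition nb g := odflt g [pick y | eG g y].

Lemma nbP g : eG g (nb g).
Proof. by rewrite /nb; case: pickP => [//|none]; have [y] := iG g; rewrite none. Qed.

Definition X T := S' :|: T :|: S''.

Lemma S_sub_X T : S \subset X T.
Proof. by rewrite S_split /X setUAC subsetUl. Qed.

Lemma S''_sub_X T : S'' \subset X T.
Proof. exact: subsetUr. Qed.

Lemma X_tds T : S' \subset NS eG T -> is_tds eG (X T).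
Proof.
move=> T_dom; apply/is_tdsP => w.
case: (near_S w) => [|[s sS esw]]; last by exists s; rewrite // (subsetP (S_sub_X T)).
rewrite S_split => /setUP [wS'|wS''].
  have /NSP [v vT evw] := subsetP T_dom w wS'.
  by exists v; rewrite // /X !inE vT orbT.
have [h [wh _]] := S''P w wS''.
have [g gh egw] := S''_dominated wS'' wh.
by exists g; rewrite // (subsetP (S_sub_X T)) //; apply/SP; exists h.
Qed.

Lemma X_tight T : S' \subset NS eG T -> #|T| <= #|S'| ->
  [/\ #|X T| = #|D|, #|T| = #|S'|, [disjoint S' & T],
       [disjoint S' :|: T & S''] & #|D| = 2 * #|S'| + #|S''|].
Proof.
move=> T_dom T_small; have := gamma_t_le (X_tds T_dom); rewrite -card_D /X => le_DX.
have [le_X disj_X] := leq_card_setU (S' :|: T) S''.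
have [le_S'T disj_S'T] := leq_card_setU S' T.
have := card_D_ge; split; lia.
Qed.

Lemma image_dom F : {in S', forall s, eG s (F s)} -> S' \subset NS eG (F @: S').
Proof.
move=> eF; apply/subsetP => s sS; apply/NSP; exists (F s); first exact: imset_f.
by rewrite eG_sym eF.
Qed.

Lemma nb_dom : {in S', forall s, eG s (nb s)}.
Proof. by move=> s _; exact: nbP. Qed.

(* (C), (D) and (I) apply X_tight to F @: S' for a choice F of neighbours of S' in
   which one choice has been redirected to a prescribed neighbour. *)
Definition redirect x y (F : VG -> VG) s := if s == x then y else F s.

Lemma redirect_dom x y F : eG x y ->
  {in S', forall s, eG s (F s)} -> {in S', forall s, eG s (redirect x y F s)}.
Proof. by move=> exy eF s sS; rewrite /redirect; case: eqP => [->|_]; last exact: eF. Qed.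

Lemma redirect_image x y F : x \in S' -> y \in redirect x y F @: S'.
Proof. by move=> xS; apply/imsetP; exists x; rewrite // /redirect eqxx. Qed.

Lemma no_edge_S'S'' x y : x \in S' -> y \in S'' -> ~~ eG x y.
Proof.
move=> xS yS; apply/negP => exy.
have [_ _ _ disj _] := X_tight (image_dom (redirect_dom exy nb_dom)) (leq_imset_card _ _).
by move: (disjointFl disj yS); rewrite inE redirect_image ?orbT.
Qed.

Lemma S'_independent x y : x \in S' -> y \in S' -> ~~ eG x y.
Proof.
move=> xS yS; apply/negP => exy.
have [_ _ disj _ _] := X_tight (image_dom (redirect_dom exy nb_dom)) (leq_imset_card _ _).
by move: (disjointFr disj yS); rewrite redirect_image.
Qed.

Lemma S'_no_common_nb x y z : x \in S' -> y \in S' -> x != y -> ~~ (eG x z && eG y z).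
Proof.
move=> xS yS nxy; apply/negP => /andP [exz eyz].
pose F := redirect y z (redirect x z nb).
have F_dom := redirect_dom eyz (redirect_dom exz nb_dom).
have [_ card_T _ _ _] := X_tight (image_dom F_dom) (leq_imset_card _ _).
have /imset_injP F_inj : #|F @: S'| == #|S'| by rewrite card_T.
have Fx : F x = z by rewrite /F /redirect (negbTE nxy) eqxx.
have Fy : F y = z by rewrite /F /redirect eqxx.
by case/eqP: nxy; apply: F_inj; rewrite ?Fx ?Fy.
Qed.

Lemma pn_X_S'' T g w : g \in S'' -> w \in pn eG g (X T) ->
  w \in S'' /\ forall h, (g, h) \in D -> (w, h) \in D.
Proof.
move=> gS /pnP [gX ewg only_g_X].
have only_g v : v \in S -> eG v w -> v = g.
  by move=> vS evw; apply: only_g_X; rewrite 1?eG_sym // (subsetP (S_sub_X T)).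
have [h [gh uniq_g]] := S''P g gS.
have wS : w \in S.
  apply: contraT => wS; have [h' nh'] := other_vertex h.
  have [g' g'h' eg'w] := notS_dominated h' wS.
  have eg' : g' = g by apply: only_g => //; apply/SP; exists h'.
  by move: nh'; rewrite (uniq_g h') -?eg' ?eqxx.
move: wS; rewrite S_split => /setUP [wS'|wS''].
  by move: (no_edge_S'S'' wS' gS); rewrite ewg.
split=> // h' /uniq_g ->{h'}; have [hw [wh _]] := S''P w wS''.
have [g' g'hw eg'w] := S''_dominated wS'' wh.
have eg' : g' = g by apply: only_g => //; apply/SP; exists hw.
by rewrite -(uniq_g hw) -?eg'.
Qed.

Lemma S''_in_pn T w : S' \subset NS eG T -> #|T| <= #|S'| -> w \in S'' ->
  exists2 g, g \in S'' & w \in pn eG g (X T).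
Proof.
move=> T_dom T_small wS; have [card_X _ _ _ _] := X_tight T_dom T_small.
pose pv g := odflt g [pick v in pn eG g (X T)].
have pvP g : g \in S'' -> pv g \in pn eG g (X T).
  move=> gS; rewrite /pv; case: pickP => [//|none].
  have min_X : #|X T| <= gamma_t eG by rewrite card_X card_D.
  by have [v] := min_tds_pn eG_sym (X_tds T_dom) min_X (subsetP (S''_sub_X T) g gS); rewrite none.
(* The private neighbours of distinct vertices are distinct, so picking one for
   each vertex of S'' injects S'' into itself. *)
have pv_sub : pv @: S'' \subset S''.
  by apply/subsetP => _ /imsetP [g gS ->]; have [] := pn_X_S'' gS (pvP g gS).
have pv_inj : {in S'' &, injective pv}.
  move=> g1 g2 g1S g2S eq_pv; have /pnP [_ _ only_g1] := pvP g1 g1S.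
  by have /pnP [g2X epv _] := pvP g2 g2S; rewrite (only_g1 g2) // eq_pv.
have pv_onto : pv @: S'' = S''
  by apply/eqP; rewrite eqEcard pv_sub (card_in_imset pv_inj) leqnn.
have /imsetP [g gS ->] : w \in pv @: S'' by rewrite pv_onto.
by exists g => //; exact: pvP.
Qed.

Definition T0 := nb @: S'.

Lemma T0_dom : S' \subset NS eG T0. Proof. exact: image_dom nb_dom. Qed.
Lemma T0_small : #|T0| <= #|S'|. Proof. exact: leq_imset_card. Qed.

Lemma card_D_eq : #|D| = 2 * #|S'| + #|S''|.
Proof. by have [_ _ _ _ ->] := X_tight T0_dom T0_small. Qed.

Lemma S''_one_nb : {in S'', forall w, #|Nb eG w :&: S''| = 1}.
Proof.
move=> w wS; have [g gS /pnP [_ ewg only_g]] := S''_in_pn T0_dom T0_small wS.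
apply/eqP/cards1P; exists g; apply/setP => v; rewrite !inE.
apply/andP/eqP => [[ewv vS]|->] //; apply: only_g => //; exact: (subsetP (S''_sub_X _)).
Qed.

Local Notation mate := (mate eG S'').

Lemma mate_S'' w : w \in S'' -> mate w \in S''.
Proof. exact: (mate_in S''_one_nb). Qed.

Lemma edge_mate_S'' w v : w \in S'' -> v \in S'' -> eG w v = (v == mate w).
Proof. exact: (edge_mate S''_one_nb). Qed.

Lemma mateK_S'' w : w \in S'' -> mate (mate w) = w.
Proof. exact: (mateK eG_sym S''_one_nb). Qed.

Lemma mate_layer w h : w \in S'' -> (w, h) \in D -> (mate w, h) \in D.
Proof.
move=> wS wh; have [g gS w_pn] := S''_in_pn T0_dom T0_small wS.
have /pnP [_ ewg _] := w_pn.
have [hg [ghg _]] := S''P g gS; have [_ /(_ hg ghg) whg] := pn_X_S'' gS w_pn.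
have eg : g = mate w by apply/eqP; rewrite -edge_mate_S''.
by rewrite -eg (S''_layer_uniq wS wh whg).
Qed.

Lemma S_cover : S :|: P = setT.
Proof.
apply/setP => w; rewrite !inE; case: (near_S w) => [-> //|[s sS esw]].
by case: (w \in S) => //=; apply/NSP; exists s.
Qed.

Lemma no_common_nb_S'S'' x y z : x \in S' -> y \in S'' -> ~~ (eG x z && eG y z).
Proof.
move=> xS yS; apply/negP => /andP [exz eyz].
have F_dom := redirect_dom exz nb_dom.
have [g gS /pnP [_ _ only_g]] := S''_in_pn (image_dom F_dom) (leq_imset_card _ _) yS.
have zX : z \in X (redirect x z nb @: S') by rewrite /X !inE redirect_image ?orbT.
by move: (no_edge_S'S'' xS gS); rewrite -(only_g z) ?exz.
Qed.

Lemma S''_kK2 : exists k, isomorphic (induced eG S'') (kK2 k).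
Proof. exact: (induced_kK2 eG_sym eG_irr S''_one_nb). Qed.

Lemma S''_layer_one_nb h : {in S''_ h, forall w, #|Nb eG w :&: S''_ h| = 1}.
Proof.
move=> w; rewrite mem_S''_ => /andP [wS wh]; apply/eqP/cards1P; exists (mate w).
apply/setP => v; rewrite !inE mem_S''_; apply/andP/eqP => [[ewv /andP [vS _]]|->].
  by apply/eqP; rewrite -edge_mate_S''.
by rewrite edge_mate_S'' ?mate_S'' ?mate_layer ?eqxx.
Qed.

Lemma S''_layer_kK2 h : exists k, isomorphic (induced eG (S''_ h)) (kK2 k).
Proof. exact: (induced_kK2 eG_sym eG_irr (@S''_layer_one_nb h)). Qed.

Lemma S''_layer_tdom h : tdominates eG (S''_ h) (P'' :|: S''_ h).
Proof.
apply/subsetP => w /setUP [/setDP [/NSP [y yS eyw] wS'']|]; last first.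
  rewrite mem_S''_ => /andP [wS wh]; apply/NSP; exists (mate w).
    by rewrite mem_S''_ mate_S'' ?mate_layer.
  by rewrite eG_sym edge_mate_S'' ?mate_S''.
have wS : w \notin S.
  rewrite S_split inE negb_or wS'' andbT; apply: contraT => /negPn wS'.
  by move: (no_edge_S'S'' wS' yS); rewrite eG_sym eyw.
have [g gh egw] := notS_dominated h wS.
have : g \in S by apply/SP; exists h.
rewrite S_split => /setUP [gS'|gS''].
  by move: (no_common_nb_S'S'' w gS' yS); rewrite egw eyw.
by apply/NSP; exists g; rewrite // mem_S''_ gS''.
Qed.

Lemma X_T0_nb_avoiding h (A : {set VG}) w : A \subset S''_ h -> {in A, forall a, w != mate a} ->
  exists2 v, v \in X T0 :\: A & eG v w.
Proof.
move=> A_h w_nmate; have [_ _ _ disj_S'T0_S'' _] := X_tight T0_dom T0_small.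
have A_S'' a : a \in A -> a \in S'' by move/(subsetP A_h); rewrite mem_S''_ => /andP [].
case: (boolP (w \in S)) => [|wS]; first rewrite S_split => /setUP [wS'|wS''].
- exists (nb w); last by rewrite eG_sym nbP.
  have nbT0 : nb w \in S' :|: T0 by rewrite inE imset_f ?orbT.
  rewrite in_setD /X !inE (imset_f nb wS') orbT andbT.
  by apply/negP => /A_S''; rewrite (disjointFr disj_S'T0_S'' nbT0).
- exists (mate w); last by rewrite eG_sym edge_mate_S'' ?mate_S''.
  rewrite in_setD (subsetP (S''_sub_X _)) ?mate_S'' // andbT.
  by apply/negP => mA; move: (w_nmate _ mA); rewrite mateK_S'' ?eqxx.
- have [h' nh'] := other_vertex h; have [g gh' egw] := notS_dominated h' wS.
  exists g => //; rewrite in_setD (subsetP (S_sub_X _)); last by apply/SP; exists h'.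
  rewrite andbT; apply: contra nh' => /(subsetP A_h); rewrite mem_S''_ => /andP [gS gh].
  by rewrite (S''_layer_uniq gS gh' gh).
Qed.

Lemma S''_layer_no_common_nb h x y z : x \in S''_ h -> y \in S''_ h -> x != y ->
  ~~ (eG x z && eG y z).
Proof.
move=> xh yh nxy; apply/negP => /andP [exz eyz].
move: (xh) (yh); rewrite !mem_S''_ => /andP [xS xD] /andP [yS yD].
(* Trading the mates of x and y for z leaves X T0 totally dominating, but smaller. *)
pose A := [set mate x; mate y].
have A_h : A \subset S''_ h.
  by apply/subsetP => a /set2P [] ->; rewrite mem_S''_ mate_S'' ?mate_layer.
have A_X : A \subset X T0.
  apply: subset_trans A_h (subset_trans _ (S''_sub_X T0)).
  by apply/subsetP => a; rewrite mem_S''_ => /andP [].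
have card_A : #|A| = 2.
  rewrite cards2; suff -> : mate x != mate y by [].
  by apply: contra nxy => /eqP emate; rewrite -(mateK_S'' xS) emate mateK_S''.
have Y_tds : is_tds eG ((X T0 :\: A) :|: [set z]).
  apply/is_tdsP => w; case: (boolP ((w == x) || (w == y))) => [/orP [] /eqP ->|].
  - by exists z; rewrite ?inE ?eqxx ?orbT // eG_sym.
  - by exists z; rewrite ?inE ?eqxx ?orbT // eG_sym.
  rewrite negb_or => /andP [nwx nwy].
  have [|v vXA evw] := X_T0_nb_avoiding A_h (w := w).
    by move=> a /set2P [] ->; rewrite mateK_S''.
  by exists v; rewrite // inE vXA.
have [card_X _ _ _ _] := X_tight T0_dom T0_small.
have [le_Y _] := leq_card_setU (X T0 :\: A) [set z].
have := leq_trans (gamma_t_le Y_tds) le_Y.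
rewrite cardsD (setIidPr A_X) card_A cards1 -card_D -card_X.
have : 2 <= #|X T0| by rewrite -card_A subset_leq_card.
by case: #|X T0| => [|[|n]] //= _; rewrite !subSS subn0 addn1 ltnn.
Qed.

Lemma parts_disjoint :
  [/\ [disjoint S' & S''], [disjoint S' & P'] & [disjoint S' & P'']] /\
  [/\ [disjoint S'' & P'], [disjoint S'' & P''] & [disjoint P' & P'']].
Proof.
split; split; try exact: disjoint_S'S''; apply/disjointP => x.
- by move=> xS /setDP [_ /negP].
- move=> xS /setDP [/NSP [y yS eyx] _].
  by move: (no_edge_S'S'' xS yS); rewrite eG_sym eyx.
- move=> xS /setDP [/NSP [y yS eyx] _].
  by move: (no_edge_S'S'' yS xS); rewrite eyx.
- by move=> xS /setDP [_ /negP].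
- move=> /setDP [/NSP [y yS eyx] _] /setDP [/NSP [y' y'S ey'x] _].
  by move: (no_common_nb_S'S'' x yS y'S); rewrite eyx ey'x.
Qed.

Lemma pn_X_mate T g : S' \subset NS eG T -> #|T| <= #|S'| -> g \in S'' ->
  pn eG g (X T) = [set mate g].
Proof.
move=> T_dom T_small gS; apply/setP => w; rewrite inE; apply/idP/eqP => [w_pn|->].
  have [wS _] := pn_X_S'' gS w_pn; have /pnP [_ ewg _] := w_pn.
  by apply/eqP; rewrite -edge_mate_S'' // eG_sym.
have [g' g'S m_pn] := S''_in_pn T_dom T_small (mate_S'' gS).
have /pnP [_ emg' _] := m_pn.
have eg' : g' = g by apply/eqP; rewrite -(mateK_S'' gS) -edge_mate_S'' ?mate_S''.
by move: m_pn; rewrite eg'.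
Qed.

Lemma min_S'_dominator T : tdominates eG T S' ->
  (forall T2 : {set VG}, tdominates eG T2 S' -> #|T| <= #|T2|) ->
  [/\ T \subset P', #|T| = #|S'|, is_min_tds eG (X T) &
      forall g, g \in S'' -> pn eG g (X T) \subset S'' /\ #|pn eG g (X T)| = 1].
Proof.
move=> T_dom T_min; have T_small : #|T| <= #|S'| := leq_trans (T_min _ T0_dom) T0_small.
have [card_X card_T disj_S'T _ _] := X_tight T_dom T_small.
split=> //.
- apply/subsetP => t tT; rewrite in_setD (disjointFl disj_S'T tT) /=.
  apply: contraT => t_far; have : #|T| <= #|T :\ t|.
    apply: T_min; apply/subsetP => s sS; have /NSP [v vT evs] := subsetP T_dom s sS.
    apply/NSP; exists v => //; rewrite in_setD1 vT andbT.
    by apply: contraNneq t_far => evt; apply/NSP; exists s; rewrite // eG_sym -evt.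
  by rewrite (cardsD1 t T) tT ltnn.
- by rewrite /is_min_tds X_tds //= card_X card_D.
by move=> g gS; rewrite pn_X_mate // sub1set mate_S'' // cards1.
Qed.

Lemma parts_cover : (S' :|: P') :|: (S'' :|: P'') = setT.
Proof.
apply/setP => w; rewrite !inE; case: (near_S w) => [|[s]].
  by rewrite S_split inE => /orP [] ->; rewrite ?orbT.
rewrite S_split => /setUP [] sS esw.
  have -> : w \in NS eG S' by apply/NSP; exists s.
  by case: (w \in S').
have -> : w \in NS eG S'' by apply/NSP; exists s.
by case: (w \in S''); rewrite ?orbT.
Qed.

Lemma S'P'_dom : S' :|: P' \subset NS eG (S' :|: T0).
Proof.
apply/subsetP => w /setUP [wS|/setDP [wN _]]; rewrite NSU inE ?wN //.
by rewrite (subsetP T0_dom) ?orbT.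
Qed.

Lemma S''P''_dom : S'' :|: P'' \subset NS eG S''.
Proof.
apply/subsetP => w /setUP [wS|/setDP [//]]; apply/NSP; exists (mate w); rewrite ?mate_S'' //.
by rewrite eG_sym edge_mate_S'' ?mate_S''.
Qed.

Lemma S'P'_tdom_ge Z : S' :|: P' \subset NS eG Z -> 2 * #|S'| <= #|Z|.
Proof.
move=> Z_dom; have := gamma_t_le (tds_setU Z_dom S''P''_dom parts_cover).
rewrite -card_D card_D_eq; have [le_ZS'' _] := leq_card_setU Z S''; lia.
Qed.

Lemma S''P''_tdom_ge Z : S'' :|: P'' \subset NS eG Z -> #|S''| <= #|Z|.
Proof.
move=> Z_dom; have := gamma_t_le (tds_setU S'P'_dom Z_dom parts_cover).
rewrite -card_D card_D_eq; have [le_U _] := leq_card_setU (S' :|: T0) Z.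
have [le_S'T0 _] := leq_card_setU S' T0; have := T0_small; lia.
Qed.

Lemma gamma_t_S'P' : gamma_t (induced eG (S' :|: P')) = 2 * #|S'|.
Proof.
apply: gamma_t_induced => [|Z _]; last exact: S'P'_tdom_ge.
have [_ _ disj_S'T0 _ _] := X_tight T0_dom T0_small.
exists (S' :|: T0); last first.
  have [le_S'T0 _] := leq_card_setU S' T0; have := T0_small; lia.
split; last exact: S'P'_dom; apply: setUS; apply/subsetP => _ /imsetP [s sS ->].
rewrite in_setD (disjointFl disj_S'T0) ?imset_f //; apply/NSP; exists s => //.
exact: nbP.
Qed.

Lemma gamma_S'P' : gamma (induced eG (S' :|: P')) = #|S'|.
Proof.
apply: gamma_induced => [|Z _ Z_dom].
  exists S' => //; split; first exact: subsetUl.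
  by apply: setUS; exact: subsetDl.
suff : 2 * #|S'| <= 2 * #|Z| by rewrite leq_pmul2l.
apply: leq_trans (S'P'_tdom_ge (Z := Z :|: nb @: Z) _) _.
  apply: subset_trans Z_dom _; rewrite NSU; apply/subsetP => w /setUP [wZ|wN].
    by rewrite inE; apply/orP; right; apply/NSP; exists (nb w); rewrite ?imset_f // eG_sym nbP.
  by rewrite inE wN.
have [le_U _] := leq_card_setU Z (nb @: Z); have := leq_imset_card nb Z; lia.
Qed.

Lemma gamma_t_S''P'' : gamma_t (induced eG (S'' :|: P'')) = #|S''|.
Proof.
apply: gamma_t_induced => [|Z _]; last exact: S''P''_tdom_ge.
by exists S'' => //; split; [exact: subsetUl | exact: S''P''_dom].
Qed.

Lemma S'_full_column s h : s \in S' -> (s, h) \in D.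
Proof.
move=> sS; have [_ _ disj_S'T0 disj_S'T0_S'' _] := X_tight T0_dom T0_small.
have nbT0 : nb s \in T0 := imset_f nb sS.
have nbS : nb s \notin S.
  by rewrite S_split inE (disjointFl disj_S'T0 nbT0) (disjointFr disj_S'T0_S'') // inE nbT0 orbT.
have [g gh egnb] := notS_dominated h nbS.
have : g \in S by apply/SP; exists h.
rewrite S_split => /setUP [gS'|gS''].
  case: (eqVneq s g) => [-> //|nsg].
  by move: (S'_no_common_nb (nb s) sS gS' nsg); rewrite nbP egnb.
by move: (no_common_nb_S'S'' (nb s) sS gS''); rewrite nbP egnb.
Qed.

Lemma column_le2 s : s \in S' -> #|column s| <= 2.
Proof.
move=> sS; have := card_D_split; rewrite card_D_eq card_D' (big_setD1 s sS) /=.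
set rest := \sum_(i in _) _; have : 2 * #|S' :\ s| <= rest.
  rewrite mulnC -sum_nat_const; apply: leq_sum => i /setD1P [_]; exact: column_ge2.
rewrite (cardsD1 s S') sS add1n; lia.
Qed.

Lemma card_VH_le_column s : s \in S' -> #|VH| <= #|column s|.
Proof.
move=> sS; have pair_s_inj : injective (fun h : VH => (s, h)) by move=> h1 h2 [->].
rewrite -cardsT -(card_imset _ pair_s_inj); apply/subset_leq_card/subsetP => _ /imsetP [h _ ->].
have [h' nh'] := other_vertex h.
by rewrite inE eqxx andbT (in_D' nh') ?S'_full_column.
Qed.

Lemma S'_eq0 : ~ isomorphic eH (kK2 1) -> S' = set0.
Proof.
move=> not_K2; apply/eqP/negPn/negP => /set0Pn [s sS]; apply: not_K2.
have [h1 eh01] := iH h0; apply: isomorphic_K2 sH eh01 _.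
exact: leq_trans (card_VH_le_column sS) (column_le2 sS).
Qed.

End Proposition3.

Theorem proposition3 (VG VH : finType) (eG : rel VG) (eH : rel VH)
  (sG : simple_graph eG) (sH : simple_graph eH)
  (cG : connected eG) (cH : connected eH)
  (iG : no_isolated eG) (iH : no_isolated eH)
  (gH : gamma_t eH = 2)
  (gGH : gamma_t eG = gamma_t (cartesian eG eH))
  (D : {set VG * VH}) (hD : is_min_tds (cartesian eG eH) D) :
  let D' := [set p in D | [exists h' : VH, (h' != p.2) && ((p.1, h') \in D)]] in
  let D'' := D :\: D' in
  let D''_ := fun h : VH => [set p in D'' | p.2 == h] in
  let S := [set p.1 | p in D] in
  let S' := [set p.1 | p in D'] in
  let S'' := [set p.1 | p in D''] in
  let S''_ := fun h : VH => [set p.1 | p in D''_ h] in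
  let P := NS eG S :\: S in
  let P' := NS eG S' :\: S' in
  let P'' := NS eG S'' :\: S'' in
  (* (A) *) S :|: P = [set: VG] /\
  (* (B) *) gamma_t eG = 2 * #|S'| + #|S''| /\
  (* (C) *) (forall x y, x \in S' -> y \in S' -> ~~ eG x y) /\
            (forall x y z, x \in S' -> y \in S' -> x != y -> ~~ (eG x z && eG y z)) /\
  (* (D) *) (forall x y, x \in S' -> y \in S'' -> ~~ eG x y) /\
  (* (E) *) (exists k, isomorphic (induced eG S'') (kK2 k)) /\
  (* (E') *) (forall T' : {set VG}, tdominates eG T' S' ->
               (forall T2 : {set VG}, tdominates eG T2 S' -> #|T'| <= #|T2|) ->
               let X := S' :|: T' :|: S'' in
               [/\ T' \subset P', #|T'| = #|S'|, is_min_tds eG X &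
                   forall g, g \in S'' -> pn eG g X \subset S'' /\ #|pn eG g X| = 1]) /\
  (* (F) *) (forall h : VH, exists k, isomorphic (induced eG (S''_ h)) (kK2 k)) /\
  (* (G) *) (forall h : VH, tdominates eG (S''_ h) (P'' :|: S''_ h)) /\
  (* (H) *) (forall (h : VH) x y z, x \in S''_ h -> y \in S''_ h -> x != y ->
               ~~ (eG x z && eG y z)) /\
  (* (I) *) (forall x y z, x \in S' -> y \in S'' -> ~~ (eG x z && eG y z)) /\
  (* (J) *) ([/\ [disjoint S' & S''], [disjoint S' & P'] & [disjoint S' & P'']] /\
             [/\ [disjoint S'' & P'], [disjoint S'' & P''] & [disjoint P' & P'']]) /\
  (* (K) *) (gamma_t (induced eG (S' :|: P')) = 2 * gamma (induced eG (S' :|: P')) /\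
             2 * gamma (induced eG (S' :|: P')) = 2 * #|S'|) /\
  (* (L) *) gamma_t (induced eG (S'' :|: P'')) = #|S''| /\
  (* (M) *) (~ isomorphic eH (kK2 1) -> S' = set0).
Proof.
have /card_gt0P [h0 _] : 0 < #|VH| by apply: leq_trans (gamma_t_le_card eH); rewrite gH.
case/andP: hD => D_tds /eqP; rewrite -gGH => card_D.
move=> D' D'' D''_ S S' S'' S''_ P P' P''.
split; first exact: (S_cover h0 D_tds).
split; first by rewrite -card_D (card_D_eq sG sH iG h0 D_tds card_D).
split; first exact: (S'_independent sG sH iG h0 D_tds card_D).
split; first exact: (S'_no_common_nb sG sH iG h0 D_tds card_D).
split; first exact: (no_edge_S'S'' sG sH iG h0 D_tds card_D).
split; first exact: (S''_kK2 sG sH iG iH h0 D_tds card_D).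
split; first exact: (min_S'_dominator sG sH iG iH h0 D_tds card_D).
split; first exact: (S''_layer_kK2 sG sH iG iH h0 D_tds card_D).
split; first exact: (S''_layer_tdom sG sH iG iH h0 D_tds card_D).
split; first exact: (S''_layer_no_common_nb sG sH iG iH h0 D_tds card_D).
split; first exact: (no_common_nb_S'S'' sG sH iG iH h0 D_tds card_D).
split; first exact: (parts_disjoint sG sH iG iH h0 D_tds card_D).
split.
  by rewrite (gamma_t_S'P' sG sH iG iH h0 D_tds card_D) (gamma_S'P' sG sH iG iH h0 D_tds card_D).
split; first exact: (gamma_t_S''P'' sG sH iG iH h0 D_tds card_D).
exact: (S'_eq0 sG sH iG iH h0 D_tds card_D).
Qed.
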